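(* Let $\theta(x,y)$ be the formula $y+x=x\to y=0$. Then $\mathcal{T}+\mathrm{IND}(\mathrm{Open}^-(\mathcal{T}))\nvdash\theta(x,x)$.
   Context: Language $\{0/0,s/1,p/1,+/2\}$; $\mathcal{T}$ has axioms (universally closed) $0\neq s(x)$, $p(0)=0$, $p(s(x))=x$, $x+0=x$, $x+s(y)=s(x+y)$. $\mathrm{Open}^-(\mathcal{T})$ is the set of quantifier-free formulas of this language having at most one free variable. $I_x\varphi=\forall\vec z(\varphi(0,\vec z)\wedge\forall x(\varphi(x,\vec z)\to\varphi(s(x),\vec z))\to\forall x\varphi(x,\vec z))$ and $\mathrm{IND}(\Gamma)=\{I_x\gamma:\gamma\in\Gamma\}$ (so here induction formulas have no parameters). *)

From Stdlib Require Import List.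
Import ListNotations.

Inductive term : Type :=
| Var : nat -> term
| Zero : term
| Succ : term -> term
| Pred : term -> term
| Plus : term -> term -> term.

Inductive form : Type :=
| Bot : form
| Eq : term -> term -> form
| Imp : form -> form -> form
| And : form -> form -> form
| Or : form -> form -> form
| All : form -> form
| Ex : form -> form.

Definition Neg (A : form) : form := Imp A Bot.

Fixpoint tsubst (s : nat -> term) (t : term) : term :=
  match t with
  | Var n => s n
  | Zero => Zero
  | Succ u => Succ (tsubst s u)
  | Pred u => Pred (tsubst s u)
  | Plus u v => Plus (tsubst s u) (tsubst s v)
  end.

Definition shift : nat -> term := fun n => Var (S n).

Definition up (s : nat -> term) : nat -> term :=
  fun n => match n with 0 => Var 0 | S k => tsubst shift (s k) end.

Fixpoint fsubst (s : nat -> term) (A : form) : form :=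
  match A with
  | Bot => Bot
  | Eq t u => Eq (tsubst s t) (tsubst s u)
  | Imp A B => Imp (fsubst s A) (fsubst s B)
  | And A B => And (fsubst s A) (fsubst s B)
  | Or A B => Or (fsubst s A) (fsubst s B)
  | All A => All (fsubst (up s) A)
  | Ex A => Ex (fsubst (up s) A)
  end.

Definition inst (t : term) : nat -> term :=
  fun n => match n with 0 => t | S k => Var k end.

Inductive prv : list form -> form -> Prop :=
| P_ctx G A : In A G -> prv G A
| P_impI G A B : prv (A :: G) B -> prv G (Imp A B)
| P_impE G A B : prv G (Imp A B) -> prv G A -> prv G B
| P_botE G A : prv G Bot -> prv G A
| P_dn G A : prv G (Neg (Neg A)) -> prv G A
| P_andI G A B : prv G A -> prv G B -> prv G (And A B)
| P_andE1 G A B : prv G (And A B) -> prv G A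
| P_andE2 G A B : prv G (And A B) -> prv G B
| P_orI1 G A B : prv G A -> prv G (Or A B)
| P_orI2 G A B : prv G B -> prv G (Or A B)
| P_orE G A B C : prv G (Or A B) -> prv (A :: G) C -> prv (B :: G) C -> prv G C
| P_allI G A : prv (map (fsubst shift) G) A -> prv G (All A)
| P_allE G A t : prv G (All A) -> prv G (fsubst (inst t) A)
| P_exI G A t : prv G (fsubst (inst t) A) -> prv G (Ex A)
| P_exE G A B : prv G (Ex A) -> prv (A :: map (fsubst shift) G) (fsubst shift B) -> prv G B
| P_refl G t : prv G (Eq t t)
| P_leib G A s t : prv G (Eq s t) -> prv G (fsubst (inst s) A) -> prv G (fsubst (inst t) A).

Definition provable (Th : form -> Prop) (A : form) : Prop :=
  exists G : list form, (forall B, In B G -> Th B) /\ prv G A.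

Definition v0 := Var 0.
Definition v1 := Var 1.
Inductive T_ax : form -> Prop :=
| T1 : T_ax (All (Neg (Eq Zero (Succ v0))))
| T2 : T_ax (Eq (Pred Zero) Zero)
| T3 : T_ax (All (Eq (Pred (Succ v0)) v0))
| T4 : T_ax (All (Eq (Plus v0 Zero) v0))
| T5 : T_ax (All (All (Eq (Plus v1 (Succ v0)) (Succ (Plus v1 v0))))).

Fixpoint qf (A : form) : Prop :=
  match A with
  | Bot | Eq _ _ => True
  | Imp A B | And A B | Or A B => qf A /\ qf B
  | All _ | Ex _ => False
  end.

Fixpoint tbound (n : nat) (t : term) : Prop :=
  match t with
  | Var k => k < n
  | Zero => True
  | Succ u | Pred u => tbound n u
  | Plus u v => tbound n u /\ tbound n v
  end.
Fixpoint fbound (n : nat) (A : form) : Prop :=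
  match A with
  | Bot => True
  | Eq t u => tbound n t /\ tbound n u
  | Imp A B | And A B | Or A B => fbound n A /\ fbound n B
  | All A | Ex A => fbound (S n) A
  end.

(* Open^-(T): quantifier-free formulas with at most one free variable (x = Var 0) *)
Definition OpenMinus (A : form) : Prop := qf A /\ fbound 1 A.

(* I_x phi = phi(0) /\ forall x (phi(x) -> phi(s x)) -> forall x phi(x) *)
Definition succ0 : nat -> term :=
  fun n => match n with 0 => Succ (Var 0) | S k => Var (S k) end.
Definition Ind (A : form) : form :=
  Imp (And (fsubst (inst Zero) A) (All (Imp A (fsubst succ0 A)))) (All A).

Definition IND_OpenMinus (B : form) : Prop := exists A, OpenMinus A /\ B = Ind A.

Definition T_IOpen (B : form) : Prop := T_ax B \/ IND_OpenMinus B.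

Definition theta : form := Imp (Eq (Plus v1 v0) v0) (Eq v1 Zero).
Definition theta_xx : form := fsubst (fun n => Var 0) theta.

(* Countermodel: the naturals followed by a copy of the integers.  Succ and pred act as
   +1 and -1 on the integer copy, and a sum with an integer summand is again an integer.
   All axioms of T hold, and the nonstandard element 0 satisfies x + x = x without being 0.
   Open induction holds because a term in one variable x is either a standard constant
   or behaves like c x + d with c >= 1, at large standard x as well as at very negative
   nonstandard x.  Hence an open formula in x has one truth value that it takes at all
   large standard x and at all very negative nonstandard x.  If the formula holds at 0
   and is preserved by successor, it holds on all standard x, so this truth value is
   "true", and from the far negative end successor spreads it over the integer copy. *)

From Stdlib Require Import List ZArith Lia Classical.
Open Scope Z_scope.

Record model := {
  carrier :> Type;
  m_zero : carrier;
  m_succ : carrier -> carrier;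
  m_pred : carrier -> carrier;
  m_plus : carrier -> carrier -> carrier }.

Section Semantics.

Variable M : model.

Fixpoint eval (t : term) (r : nat -> M) : M :=
  match t with
  | Var n => r n
  | Zero => m_zero M
  | Succ u => m_succ M (eval u r)
  | Pred u => m_pred M (eval u r)
  | Plus u v => m_plus M (eval u r) (eval v r)
  end.

Definition scons (x : M) (r : nat -> M) : nat -> M :=
  fun n => match n with O => x | S k => r k end.

Fixpoint holds (A : form) (r : nat -> M) : Prop :=
  match A with
  | Bot => False
  | Eq t u => eval t r = eval u r
  | Imp A B => holds A r -> holds B r
  | And A B => holds A r /\ holds B r
  | Or A B => holds A r \/ holds B r
  | All A => forall x, holds A (scons x r)
  | Ex A => exists x, holds A (scons x r)
  end.

Lemma eval_bound_ext n t r r' :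
  tbound n t -> (forall k, (k < n)%nat -> r k = r' k) -> eval t r = eval t r'.
Proof. intros Ht Hr; induction t; simpl in *; try destruct Ht; f_equal; auto. Qed.

Lemma holds_bound_ext A : forall n r r',
  fbound n A -> (forall k, (k < n)%nat -> r k = r' k) -> (holds A r <-> holds A r').
Proof.
  induction A; intros n r r' HA Hr; simpl in *;
    try (destruct HA; rewrite (IHA1 n r r'), (IHA2 n r r') by assumption; tauto).
  - tauto.
  - destruct HA as [Ht Hu].
    rewrite (eval_bound_ext n t r r'), (eval_bound_ext n t0 r r') by assumption; tauto.
  - assert (Hx : forall x, holds A (scons x r) <-> holds A (scons x r')).
    { intros x; apply (IHA (S n)); [assumption|]. intros [|k] Hk; simpl; auto with arith. }
    split; intros H x; apply Hx, H.
  - assert (Hx : forall x, holds A (scons x r) <-> holds A (scons x r')).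
    { intros x; apply (IHA (S n)); [assumption|]. intros [|k] Hk; simpl; auto with arith. }
    split; intros [x H]; exists x; apply Hx, H.
Qed.

Lemma holds_unary A r : fbound 1 A -> holds A r <-> holds A (fun _ => r 0%nat).
Proof.
  intros HA; apply (holds_bound_ext A 1); [assumption |].
  intros [|k] Hk; [reflexivity | lia].
Qed.

Lemma eval_subst s t : forall r r',
  (forall n, eval (s n) r = r' n) -> eval (tsubst s t) r = eval t r'.
Proof. induction t; intros r r' Hs; simpl; f_equal; auto. Qed.

Lemma eval_up s x r r' :
  (forall n, eval (s n) r = r' n) -> forall n, eval (up s n) (scons x r) = scons x r' n.
Proof. intros Hs [|n]; simpl; [reflexivity|]. rewrite <- Hs. now apply eval_subst. Qed.

Lemma holds_subst A : forall s r r',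
  (forall n, eval (s n) r = r' n) -> (holds (fsubst s A) r <-> holds A r').
Proof.
  induction A; intros s r r' Hs; simpl;
    try (rewrite (IHA1 s r r'), (IHA2 s r r') by assumption; tauto).
  - tauto.
  - rewrite !(eval_subst s _ r r') by assumption; tauto.
  - split; intros H x; specialize (H x); revert H; apply IHA, eval_up, Hs.
  - split; intros [x H]; exists x; revert H; apply IHA, eval_up, Hs.
Qed.

Lemma holds_shift A x r : holds (fsubst shift A) (scons x r) <-> holds A r.
Proof. now apply holds_subst. Qed.

Lemma holds_inst A t r : holds (fsubst (inst t) A) r <-> holds A (scons (eval t r) r).
Proof. apply holds_subst; now intros [|n]. Qed.

Lemma holds_unary_subst A s r :
  fbound 1 A -> holds (fsubst s A) r <-> holds A (fun _ => eval (s 0%nat) r).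
Proof.
  intros HA; rewrite (holds_subst A s r (fun n => eval (s n) r)) by reflexivity.
  apply holds_unary, HA.
Qed.

Lemma prv_sound G A :
  prv G A -> forall r, (forall B, In B G -> holds B r) -> holds A r.
Proof.
  induction 1; intros r HG; simpl in *.
  - auto.
  - intros HA; apply IHprv; intros C [<-|HC]; auto.
  - apply IHprv1; auto.
  - destruct (IHprv r HG).
  - apply NNPP; exact (IHprv r HG).
  - auto.
  - apply (IHprv r HG).
  - apply (IHprv r HG).
  - auto.
  - auto.
  - destruct (IHprv1 r HG) as [HA|HB];
      [apply IHprv2 | apply IHprv3]; intros D [<-|HD]; auto.
  - intros x; apply IHprv; intros C HC.
    apply in_map_iff in HC as [D [<- HD]].
    apply holds_shift; auto.
  - apply holds_inst, IHprv, HG.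
  - exists (eval t r); apply holds_inst, IHprv, HG.
  - destruct (IHprv1 r HG) as [x Hx].
    apply (holds_shift B x), IHprv2; intros C [<-|HC]; auto.
    apply in_map_iff in HC as [D [<- HD]].
    apply holds_shift; auto.
  - reflexivity.
  - apply holds_inst; rewrite <- (IHprv1 r HG); apply holds_inst, IHprv2, HG.
Qed.

End Semantics.

Inductive NZ := std (n : nat) | nst (z : Z).

Definition nz_succ (x : NZ) : NZ :=
  match x with std n => std (S n) | nst i => nst (i + 1) end.

Definition nz_pred (x : NZ) : NZ :=
  match x with std n => std (Nat.pred n) | nst i => nst (i - 1) end.

Definition nz_plus (x y : NZ) : NZ :=
  match x, y with
  | std a, std b => std (a + b)
  | std a, nst i => nst (Z.of_nat a + i)
  | nst j, std b => nst (j + Z.of_nat b)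
  | nst j, nst i => nst (j + i)
  end.

Definition NZ_model : model := Build_model NZ (std 0) nz_succ nz_pred nz_plus.

Lemma nz_plusC x y : nz_plus x y = nz_plus y x.
Proof. destruct x, y; simpl; f_equal; lia. Qed.

Lemma T_ax_holds_NZ A r : T_ax A -> holds NZ_model A r.
Proof.
  intros []; simpl.
  - intros [n|i]; discriminate.
  - reflexivity.
  - intros [n|i]; simpl; f_equal; lia.
  - intros [n|i]; simpl; f_equal; lia.
  - intros [n|i] [m|j]; simpl; f_equal; lia.
Qed.

Definition tval (t : term) (x : NZ) : NZ := eval NZ_model t (fun _ => x).

Definition eventually (P : nat -> Prop) : Prop :=
  exists N, forall n, (N <= n)%nat -> P n.

Definition eventually_below (P : Z -> Prop) : Prop :=
  exists B, forall i, i <= B -> P i.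

Lemma eventually_and P Q : eventually P -> eventually Q -> eventually (fun n => P n /\ Q n).
Proof.
  intros [N HP] [N' HQ]; exists (Nat.max N N'); split; [apply HP | apply HQ]; lia.
Qed.

Lemma eventually_below_and P Q :
  eventually_below P -> eventually_below Q -> eventually_below (fun i => P i /\ Q i).
Proof.
  intros [B HP] [B' HQ]; exists (Z.min B B'); split; [apply HP | apply HQ]; lia.
Qed.

Lemma eventually_mono (P Q : nat -> Prop) :
  (forall n, P n -> Q n) -> eventually P -> eventually Q.
Proof. intros HPQ [N HP]; exists N; auto. Qed.

Lemma eventually_affine_ge c d e : 1 <= c -> eventually (fun n => e <= c * Z.of_nat n + d).
Proof. intros Hc; exists (Z.to_nat (Z.abs (e - d))); intros n Hn; nia. Qed.

Lemma eventually_affine_eq_iff c d c' d' :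
  eventually (fun n => c * Z.of_nat n + d = c' * Z.of_nat n + d' <-> c = c' /\ d = d').
Proof.
  exists (S (Z.to_nat (Z.abs (d - d')))); intros n Hn; split; [|intros [-> ->]; reflexivity].
  intros E; destruct (Z.eq_dec c c'); [split; lia|].
  assert (Z.abs ((c - c') * Z.of_nat n) >= Z.of_nat n) by (rewrite Z.abs_mul; nia). lia.
Qed.

Lemma eventually_below_affine_eq_iff c d c' d' :
  eventually_below (fun i => c * i + d = c' * i + d' <-> c = c' /\ d = d').
Proof.
  exists (- Z.abs (d - d') - 1); intros i Hi; split; [|intros [-> ->]; reflexivity].
  intros E; destruct (Z.eq_dec c c'); [split; lia|].
  assert (Z.abs ((c - c') * i) >= - i) by (rewrite Z.abs_mul; nia). lia.
Qed.

Definition constant_term (t : term) : Prop := exists k, forall x, tval t x = std k.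

Definition nat_profile (t : term) (c d : Z) : Prop :=
  eventually (fun n => exists m, tval t (std n) = std m /\ Z.of_nat m = c * Z.of_nat n + d).

Definition affine_term (t : term) (c d : Z) : Prop :=
  1 <= c /\ nat_profile t c d /\ forall i, tval t (nst i) = nst (c * i + d).

Lemma affine_succ t c d : affine_term t c d -> affine_term (Succ t) c (d + 1).
Proof.
  intros (Hc & Hstd & Hnst); split; [assumption | split].
  - revert Hstd; apply eventually_mono; intros n (m & Hm & E).
    exists (S m); unfold tval in *; simpl; rewrite Hm; split; [reflexivity | lia].
  - intros i; unfold tval in *; simpl; rewrite Hnst; simpl; f_equal; lia.
Qed.

Lemma affine_pred t c d : affine_term t c d -> affine_term (Pred t) c (d - 1).
Proof.
  intros (Hc & Hstd & Hnst); split; [assumption | split].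
  - generalize (eventually_and _ _ Hstd (eventually_affine_ge c d 1 Hc)).
    apply eventually_mono; intros n ((m & Hm & E) & Hpos).
    exists (Nat.pred m); unfold tval in *; simpl; rewrite Hm; split; [reflexivity | lia].
  - intros i; unfold tval in *; simpl; rewrite Hnst; simpl; f_equal; lia.
Qed.

Lemma affine_plus t u c d c' d' :
  affine_term t c d -> affine_term u c' d' -> affine_term (Plus t u) (c + c') (d + d').
Proof.
  intros (Hc & Hstd & Hnst) (Hc' & Hstd' & Hnst'); split; [lia | split].
  - generalize (eventually_and _ _ Hstd Hstd').
    apply eventually_mono; intros n ((m & Hm & E) & (m' & Hm' & E')).
    exists (m + m')%nat; unfold tval in *; simpl; rewrite Hm, Hm'; split; [reflexivity | lia].
  - intros i; unfold tval in *; simpl; rewrite Hnst, Hnst'; simpl; f_equal; lia.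
Qed.

Lemma affine_plus_constant t u k c d :
  (forall x, tval t x = std k) -> affine_term u c d -> affine_term (Plus t u) c (Z.of_nat k + d).
Proof.
  intros Hk (Hc & Hstd & Hnst); split; [assumption | split].
  - revert Hstd; apply eventually_mono; intros n (m & Hm & E).
    exists (k + m)%nat; unfold tval in *; simpl; rewrite Hk, Hm; split; [reflexivity | lia].
  - intros i; unfold tval in *; simpl; rewrite Hk, Hnst; simpl; f_equal; lia.
Qed.

Lemma affine_term_ext t u c d :
  (forall x, tval t x = tval u x) -> affine_term t c d -> affine_term u c d.
Proof.
  intros Htu (Hc & Hstd & Hnst); split; [assumption | split].
  - revert Hstd; apply eventually_mono; intros n (m & Hm & E); exists m; rewrite <- Htu; auto.
  - intros i; rewrite <- Htu; auto.
Qed.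

Lemma term_constant_or_affine t : constant_term t \/ exists c d, affine_term t c d.
Proof.
  induction t as [n | | t IH | t IH | t IHt u IHu].
  - right; exists 1, 0; split; [lia | split].
    + exists 0%nat; intros n' _; exists n'; split; [reflexivity | lia].
    + intros i; replace (1 * i + 0) with i by lia; reflexivity.
  - left; exists 0%nat; reflexivity.
  - destruct IH as [(k & Hk) | (c & d & H)].
    + left; exists (S k); intros x; unfold tval in *; simpl; rewrite Hk; reflexivity.
    + right; exists c, (d + 1); now apply affine_succ.
  - destruct IH as [(k & Hk) | (c & d & H)].
    + left; exists (Nat.pred k); intros x; unfold tval in *; simpl; rewrite Hk; reflexivity.
    + right; exists c, (d - 1); now apply affine_pred.
  - destruct IHt as [(k & Hk) | (c & d & Ht)], IHu as [(k' & Hk') | (c' & d' & Hu)].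
    + left; exists (k + k')%nat; intros x; unfold tval in *; simpl; rewrite Hk, Hk'; reflexivity.
    + right; exists c', (Z.of_nat k + d'); now apply affine_plus_constant.
    + right; exists c, (Z.of_nat k' + d).
      apply (affine_term_ext (Plus u t)); [intros; apply nz_plusC | now apply affine_plus_constant].
    + right; exists (c + c'), (d + d'); now apply affine_plus.
Qed.

Lemma constant_nat_profile t k : (forall x, tval t x = std k) -> nat_profile t 0 (Z.of_nat k).
Proof. intros Hk; exists 0%nat; intros n _; exists k; split; [apply Hk | lia]. Qed.

Lemma std_eq_iff a b : std a = std b <-> a = b.
Proof. split; [now injection 1 | now intros ->]. Qed.

Lemma nst_eq_iff i j : nst i = nst j <-> i = j.
Proof. split; [now injection 1 | now intros ->]. Qed.

Lemma eventually_tval_eq_iff t u c d c' d' :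
  nat_profile t c d -> nat_profile u c' d' ->
  eventually (fun n => tval t (std n) = tval u (std n) <-> c = c' /\ d = d').
Proof.
  intros Ht Hu; generalize (eventually_and _ _ (eventually_and _ _ Ht Hu)
                              (eventually_affine_eq_iff c d c' d')).
  apply eventually_mono; intros n (((m & -> & E) & (m' & -> & E')) & Hiff).
  rewrite std_eq_iff, <- Hiff, <- E, <- E'; lia.
Qed.

Definition tails_agree (P : NZ -> Prop) : Prop :=
  exists b : Prop, eventually (fun n => P (std n) <-> b) /\
                   eventually_below (fun i => P (nst i) <-> b).

Lemma tails_agree_eq t u : tails_agree (fun x => tval t x = tval u x).
Proof.
  destruct (term_constant_or_affine t) as [(k & Hk) | (c & d & Hc & Ht & Hti)],
           (term_constant_or_affine u) as [(k' & Hk') | (c' & d' & Hc' & Hu & Hui)].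
  - exists (k = k'); split; [exists 0%nat | exists 0]; intros; rewrite Hk, Hk'; apply std_eq_iff.
  - exists False; split.
    + generalize (eventually_tval_eq_iff _ _ _ _ _ _ (constant_nat_profile t k Hk) Hu).
      apply eventually_mono; intros n ->; lia.
    + exists 0; intros i _; rewrite Hk, Hui; split; [discriminate | contradiction].
  - exists False; split.
    + generalize (eventually_tval_eq_iff _ _ _ _ _ _ Ht (constant_nat_profile u k' Hk')).
      apply eventually_mono; intros n ->; lia.
    + exists 0; intros i _; rewrite Hti, Hk'; split; [discriminate | contradiction].
  - exists (c = c' /\ d = d'); split; [now apply eventually_tval_eq_iff |].
    destruct (eventually_below_affine_eq_iff c d c' d') as [B HB].
    exists B; intros i Hi; rewrite Hti, Hui, nst_eq_iff; auto.
Qed.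

Lemma tails_agree_combine (op : Prop -> Prop -> Prop) P Q :
  (forall a a' b b', (a <-> a') -> (b <-> b') -> (op a b <-> op a' b')) ->
  tails_agree P -> tails_agree Q -> tails_agree (fun x => op (P x) (Q x)).
Proof.
  intros Hop (b & HP & HP') (b' & HQ & HQ'); exists (op b b'); split.
  - generalize (eventually_and _ _ HP HQ); apply eventually_mono; intros n []; auto.
  - destruct (eventually_below_and _ _ HP' HQ') as [B HB].
    exists B; intros i Hi; destruct (HB i Hi); auto.
Qed.

Lemma qf_tails_agree A : qf A -> tails_agree (fun x => holds NZ_model A (fun _ => x)).
Proof.
  induction A; simpl; intros HA; try contradiction.
  - exists False; split; [exists 0%nat | exists 0]; tauto.
  - apply tails_agree_eq.
  - apply (tails_agree_combine (fun a b => a -> b)); tauto.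
  - apply (tails_agree_combine and); tauto.
  - apply (tails_agree_combine or); tauto.
Qed.

Lemma tails_agree_induction P :
  tails_agree P -> P (std 0) -> (forall x, P x -> P (nz_succ x)) -> forall x, P x.
Proof.
  intros (b & [N HN] & [B HB]) H0 HS.
  assert (Hstd : forall n, P (std n))
    by (induction n; [assumption | apply (HS (std n)); assumption]).
  assert (Hb : b) by (apply (HN N); auto).
  assert (Hup : forall i k, P (nst i) -> P (nst (i + Z.of_nat k))).
  { intros i k Hi; induction k; [now rewrite Z.add_0_r |].
    replace (i + Z.of_nat (S k)) with (i + Z.of_nat k + 1) by lia.
    apply (HS (nst _)); assumption. }
  intros [n | j]; [apply Hstd |].
  replace j with (Z.min j B + Z.of_nat (Z.to_nat (j - Z.min j B))) by lia.
  apply Hup, HB; [lia | assumption].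
Qed.

Lemma Ind_holds_NZ A r : OpenMinus A -> holds NZ_model (Ind A) r.
Proof.
  intros [Hqf Hb]; simpl; intros [H0 HS] x.
  apply holds_unary; [assumption |].
  apply (tails_agree_induction _ (qf_tails_agree A Hqf)).
  - exact (proj1 (holds_unary_subst _ A (inst Zero) r Hb) H0).
  - intros y Hy.
    apply (holds_unary_subst _ A succ0 (scons NZ_model y r) Hb), HS, holds_unary; assumption.
Qed.

Lemma T_IOpen_holds_NZ B r : T_IOpen B -> holds NZ_model B r.
Proof. intros [HT | (A & HA & ->)]; [apply T_ax_holds_NZ | apply Ind_holds_NZ]; assumption. Qed.

Lemma theta_xx_fails_NZ : ~ holds NZ_model theta_xx (fun _ => nst 0).
Proof. simpl; intros H; discriminate (H eq_refl). Qed.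

Theorem lemma10 : ~ provable T_IOpen theta_xx.
Proof.
  intros (G & HG & Hprv).
  apply theta_xx_fails_NZ, (prv_sound _ G theta_xx Hprv).
  intros B HB; apply T_IOpen_holds_NZ, HG, HB.
Qed.
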